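(* Let $Q$ be a QNP and let $\pi$ be a policy for $Q$. If $\pi$ solves $Q$, then the policy $\pi^*$ defined in the context is a strong cyclic solution of the FOND problem $P=T(Q)$.
   Context: QNPs: $Q=\langle F,V,I,O,G\rangle$ with propositional variables $F$, numerical variables $V$ (non-negative reals), literals $p,\neg p$, $X=0$, $X>0$; actions with precondition $Pre(a)$, propositional effects $\mathit{Eff}(a)$, numerical effects $N(a)\subseteq\{Inc(X),Dec(X)\}$ (at most one per variable; $Dec(X)\in N(a)$ implies $X>0\in Pre(a)$); $a$ decrements $X$ if $Dec(X)\in N(a)$. A state assigns truth values to $F$ and reals $\ge0$ to $V$; initial states satisfy $I$ (closed world); goal states satisfy $G$; for applicable $a$, successors apply propositional effects, strictly increase $X$ for $Inc(X)$, strictly decrease $X$ for $Dec(X)$, rest unchanged. For $\epsilon>0$ an $\epsilon$-trajectory is such a sequence from an initial state where each change of a variable has magnitude $\ge\epsilon$ unless it goes from a value $<\epsilon$ to $0$. The boolean state $\bar s$ is the truth valuation on atoms $p\in F$ and $X=0$; a policy maps states to actions depending only on the boolean state; a maximal $\pi$-trajectory is infinite without goal, ends at its first goal state, or ends where $\pi$ is undefined/inapplicable; $\pi$ solves $Q$ iff for all $\epsilon>0$ all maximal $\epsilon$-$\pi$-trajectories reach a goal state. $T_D(Q)$ is the FOND problem over $F\cup\{p_{X=0}:X\in V\}$ reading $X=0$/$X>0$ as $p_{X=0}$/$\neg p_{X=0}$, replacing $Inc(X)$ by the deterministic effect $\neg p_{X=0}$ and $Dec(X)$ by the nondeterministic effect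 $\neg p_{X=0}\mid p_{X=0}$; its states are the boolean states and $\pi$ acts via $\bar s\mapsto\pi(s)$. $Dec(X)$/$Inc(X)$ actions are those with $Dec(X)$/$Inc(X)$ in $N(a)$. The policy graph $\mathcal G$ has as nodes the states of $T_D(Q)$ reachable from the initial state under $\pi$ and edges $(\bar s,\bar s')$ for $\bar s'$ a possible successor of $\bar s$ under $\pi(\bar s)$. Index the SCCs of $\mathcal G$ as $C_1,C_2,\dots$ so that if $C_i$ reaches $C_j$, $j\ne i$, then $i<j$; $scc(\bar s)$ is the index of the SCC containing $\bar s$. Fix a run of the following (modified) Sieve procedure on $\mathcal G$: repeatedly compute the SCCs of the current graph, choose an SCC $C$ and a variable $X$ such that $\pi(\bar s)$ is a $Dec(X)$ action for some $\bar s\in C$, $\pi(\bar s)$ is an $Inc(X)$ action for no $\bar s\in C$, and $X$ was not chosen in an earlier iteration for a component containing the states of $C$; remove all edges $(\bar s,\bar s')$ with $\bar s,\bar s'\in C$ and $\pi(\bar s)$ a $Dec(X)$ action; stop when no such choice exists. $stack(\bar s)$ is the sequence, in order of iterations, of the variables chosen in iterations whose chosen component contains $\bar s$. The FOND problem $T(Q)$: $n=|F|+|V|$, $Max=1+2^n$. Propositional variables: those of $T_D(Q)$, plus $in(X)$, $depth(d)$ ($0\le d\le|V|$), $index(X,d)$ ($1\le d\le|V|$), and counters $c(d)$ ($0\le d\le|V|$), $c_T$ over $\{0,\dots,Max\}$ encoded in binary; these encode a stack $\alpha$ of distinct variables ($X$ at position $d$ from the bottom iff $index(X,d)$; $|\alpha|=d$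 iff $depth(d)$). Initial state: that of $T_D(Q)$ plus $depth(0)$, counters $0$, other new atoms false; goal $G$. Actions: $Push(X,d)$ ($0\le d<|V|$): pre $\neg in(X),depth(d),c(d)<Max$; eff $in(X),index(X,d+1),depth(d+1),\neg depth(d),c(d):=c(d)+1,c(d+1):=0$. $Pop(X,d)$ ($1\le d\le|V|$): pre $in(X),index(X,d),depth(d)$; eff $\neg in(X),\neg index(X,d),\neg depth(d),depth(d-1)$. $Move$: pre $depth(0),c_T<Max$; eff $c_T:=c_T+1$. For $a\in O$ decrementing no variable: action $a$ with pre $Pre(a)$ plus $\neg in(Y)$ for each $Inc(Y)\in N(a)$, eff $\mathit{Eff}(a)$ plus $Y>0$ for each $Inc(Y)\in N(a)$. For $a$ decrementing some variable, $X$ decremented by $a$, $1\le d\le|V|$: action $a(X,d)$ with pre $Pre(a)$, $\neg in(Y)$ for $Inc(Y)\in N(a)$, $index(X,d)$; eff $\mathit{Eff}(a)$, $Y>0$ for $Inc(Y)\in N(a)$, nondeterministic $Z>0\mid Z=0$ for each $Dec(Z)\in N(a)$, $c(d'):=0$ for $d\le d'\le|V|$. A strong cyclic solution of a FOND problem is a policy such that from every state reachable from the initial state under it some goal state is reachable under it. States of $T(Q)$ are triples $\langle\bar s,c,\alpha\rangle$ (boolean state, counter values, stack). A stack $\alpha=X_1\cdots X_k$ is a prefix of $Z_1\cdots Z_m$ if $k\le m$ and $X_i=Z_i$ for $i\le k$; $\alpha X$ is $\alpha$ with $X$ pushed on top. $\pi^*(\langle\bar s,c,\alpha\rangle)$ is,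 taking the first applicable case: $Pop(X,d)$ if $c_T<scc(\bar s)$, $X$ is the top of $\alpha$ and $d=|\alpha|$; $Move$ if $c_T<scc(\bar s)$ and $\alpha$ is empty; $Pop(X,d)$ if $X$ is the top of $\alpha$, $d=|\alpha|$ and $\alpha$ is not a prefix of $stack(\bar s)$; $Push(X,d)$ if $\alpha X$ is a prefix of $stack(\bar s)$ and $d=|\alpha|$; $a$ if $\pi(\bar s)=a$ decrements no variable; $a(X,d)$ if $\pi(\bar s)=a$ decrements $X$, $X$ is at depth $d$ in $\alpha$, and $a$ decrements no other variable at a depth $d'<d$ in $\alpha$. *)

From Stdlib Require Import Reals Relations.
From mathcomp Require Import all_boot.

Set Implicit Arguments.
Unset Strict Implicit.
Unset Printing Implicit Defensive.

Section FOND.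
Variables (S A : Type) (init : S) (goal : S -> Prop)
          (app : S -> A -> Prop) (succ : S -> A -> S -> Prop)
          (p : S -> option A).

Definition pstep (s s' : S) : Prop :=
  ~ goal s /\ exists a, p s = Some a /\ app s a /\ succ s a s'.

Definition preach : S -> S -> Prop := clos_refl_trans S pstep.

Definition strong_cyclic : Prop :=
  forall s, preach init s -> exists g, preach s g /\ goal g.
End FOND.

Inductive neff := NoEff | Inc | Dec.

Definition neff_eqb (x y : neff) : bool :=
  match x, y with
  | NoEff, NoEff | Inc, Inc | Dec, Dec => true
  | _, _ => false end.

(* Conditions (sets of literals) are partial assignments:
   for p in F : Some true = p, Some false = ~p, None = not mentioned;
   for X in V : Some true = (X = 0), Some false = (X > 0), None = not mentioned.
   Propositional effects are partial assignments on F.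
   The initial condition I is given, under the closed world assumption,
   as a complete truth valuation of the atoms p in F and X = 0. *)
Record QNP (F V O : finType) := {
  IF : {ffun F -> bool};
  IV : {ffun V -> bool};               (* IV X = true  iff  X = 0 in I *)
  preF : O -> {ffun F -> option bool};
  preV : O -> {ffun V -> option bool};
  effF : O -> {ffun F -> option bool};
  neffs : O -> {ffun V -> neff};       (* at most one numerical effect per var *)
  goalF : {ffun F -> option bool};
  goalV : {ffun V -> option bool};
  dec_pre : forall a X, neffs a X = Dec -> preV a X = Some false
}.

Section QNPSemantics.
Variables (F V O : finType) (Q : QNP F V O).

(* boolean states: valuation of atoms p in F and of atoms X = 0 *)
Definition bstate := ({ffun F -> bool} * {ffun V -> bool})%type.

Definition sat_cond (cF : {ffun F -> option bool}) (cV : {ffun V -> option bool})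
    (b : bstate) : bool :=
  [forall p, if cF p is Some v then b.1 p == v else true] &&
  [forall X, if cV X is Some v then b.2 X == v else true].

Definition applicable (a : O) (b : bstate) : bool :=
  sat_cond (preF Q a) (preV Q a) b.

Definition is_goal (b : bstate) : bool := sat_cond (goalF Q) (goalV Q) b.

Definition initb : bstate := (IF Q, IV Q).

Definition decrements (a : O) (X : V) : bool := neff_eqb (neffs Q a X) Dec.
Definition increments (a : O) (X : V) : bool := neff_eqb (neffs Q a X) Inc.

Record qstate := { qF : {ffun F -> bool}; qV : V -> R }.

Definition valid_qstate (s : qstate) : Prop := forall X, Rle R0 (qV s X).

Definition is_zero (r : R) : bool := if Req_EM_T r R0 then true else false.

Definition bar (s : qstate) : bstate := (qF s, [ffun X => is_zero (qV s X)]).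

Definition q_initial (s : qstate) : Prop := valid_qstate s /\ bar s = initb.

(* s' is a successor of s under a (a is assumed applicable in s) *)
Definition qsucc (a : O) (s s' : qstate) : Prop :=
  valid_qstate s' /\
  (forall p, qF s' p = if effF Q a p is Some v then v else qF s p) /\
  (forall X, match neffs Q a X with
             | Inc => Rlt (qV s X) (qV s' X)
             | Dec => Rlt (qV s' X) (qV s X)
             | NoEff => qV s' X = qV s X end).

Definition eps_change (eps : R) (s s' : qstate) : Prop :=
  forall X, qV s' X <> qV s X ->
    Rle eps (Rabs (Rminus (qV s' X) (qV s X))) \/
    (Rlt (qV s X) eps /\ qV s' X = R0).

Definition qpolicy := bstate -> option O.

Definition pi_eps_step (pi : qpolicy) (eps : R) (s s' : qstate) : Prop :=
  exists a, pi (bar s) = Some a /\ applicable a (bar s) /\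
            qsucc a s s' /\ eps_change eps s s'.

(* pi solves Q iff for every eps > 0, every maximal eps-pi-trajectory
   reaches a goal state: infinite ones, and finite ones ending in a state
   where pi is undefined or inapplicable (maximal finite trajectories
   ending at their first goal state trivially reach the goal). *)
Definition solves (pi : qpolicy) : Prop :=
  forall eps : R, Rlt R0 eps ->
    (forall tr : nat -> qstate,
        q_initial (tr 0) ->
        (forall i, pi_eps_step pi eps (tr i) (tr i.+1)) ->
        exists i, is_goal (bar (tr i))) /\
    (forall (tr : nat -> qstate) (n : nat),
        q_initial (tr 0) ->
        (forall i, i < n -> pi_eps_step pi eps (tr i) (tr i.+1)) ->
        (match pi (bar (tr n)) with
         | None => True
         | Some a => applicable a (bar (tr n)) = false end) ->
        exists2 i, i <= n & is_goal (bar (tr i))).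

Definition td_succ (a : O) (b b' : bstate) : bool :=
  [forall p, b'.1 p == (if effF Q a p is Some v then v else b.1 p)] &&
  [forall X, match neffs Q a X with
             | Inc => b'.2 X == false
             | Dec => true
             | NoEff => b'.2 X == b.2 X end].

Variable pi : qpolicy.

Definition pg_step (b b' : bstate) : bool :=
  ~~ is_goal b &&
  (if pi b is Some a then applicable a b && td_succ a b b' else false).

Definition pg_node (b : bstate) : bool := connect pg_step initb b.

Definition pg_edge (b b' : bstate) : bool := pg_node b && pg_step b b'.

Definition scc_indexing (idx : bstate -> nat) : Prop :=
  exists k : nat,
    (forall b, pg_node b -> 0 < idx b <= k) /\
    (forall i, 0 < i <= k -> exists2 b, pg_node b & idx b = i) /\
    (forall b b', pg_node b -> pg_node b' ->
        (idx b == idx b') = connect pg_edge b b' && connect pg_edge b' b) /\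
    (forall b b', pg_node b -> pg_node b' -> connect pg_edge b b' ->
        idx b != idx b' -> idx b < idx b').

Definition pi_decs (b : bstate) (X : V) : bool :=
  if pi b is Some a then decrements a X else false.
Definition pi_incs (b : bstate) (X : V) : bool :=
  if pi b is Some a then increments a X else false.

Definition remove_edges (E : rel bstate) (ch : {set bstate} * V) : rel bstate :=
  fun u v => E u v && ~~ [&& u \in ch.1, v \in ch.1 & pi_decs u ch.2].

Definition sieve_graph (run : seq ({set bstate} * V)) : rel bstate :=
  foldl remove_edges pg_edge run.

Definition is_scc (E : rel bstate) (C : {set bstate}) : Prop :=
  exists2 u, pg_node u &
    C = [set v | pg_node v && connect E u v && connect E v u].

Definition sieve_choice (prev : seq ({set bstate} * V))
    (C : {set bstate}) (X : V) : Prop :=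
  is_scc (sieve_graph prev) C /\
  (exists2 b, b \in C & pi_decs b X) /\
  (forall b, b \in C -> ~~ pi_incs b X) /\
  ~ (exists C', (C', X) \in prev /\ C \subset C').

Definition sieve_run (run : seq ({set bstate} * V)) : Prop :=
  (forall t (C : {set bstate}) (X : V), t < size run ->
      nth (C, X) run t = (C, X) -> sieve_choice (take t run) C X) /\
  ~ (exists C X, sieve_choice run C X).

Definition stack (run : seq ({set bstate} * V)) (b : bstate) : seq V :=
  map snd (filter (fun ch : {set bstate} * V => b \in ch.1) run).

Definition nvars : nat := #|V|.
Definition Max : nat := 1 + 2 ^ (#|F| + #|V|).

(* states <bar s, c, alpha>; the stack alpha is listed bottom first, so
   X is at position d from the bottom iff nth alpha (d-1) = X *)
Record tstate := {
  tb : bstate;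
  tc : nat -> nat;     (* counters c(d), 0 <= d <= |V| *)
  tcT : nat;
  tal : seq V
}.

Inductive tact :=
| Push of V & nat
| Pop of V & nat
| Move
| Act of O            (* for a decrementing no variable *)
| ActD of O & V & nat .

Definition at_pos (al : seq V) (X : V) (d : nat) : bool :=
  (0 < d) && (d <= size al) && (nth X al d.-1 == X).

Definition t_init : tstate :=
  {| tb := initb; tc := fun _ => 0; tcT := 0; tal := [::] |}.

Definition t_goal (s : tstate) : Prop := is_goal (tb s).

Definition no_inc_in_stack (a : O) (al : seq V) : bool :=
  [forall Y, increments a Y ==> (Y \notin al)].

Definition t_app (s : tstate) (act : tact) : Prop :=
  match act with
  | Push X d => [/\ d < nvars, X \notin tal s, size (tal s) = d & tc s d < Max]
  | Pop X d => [/\ 1 <= d <= nvars, X \in tal s, at_pos (tal s) X d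
                 & size (tal s) = d]
  | Move => size (tal s) = 0 /\ tcT s < Max
  | Act a => [/\ forall Z, ~~ decrements a Z, applicable a (tb s)
               & no_inc_in_stack a (tal s)]
  | ActD a X d => [/\ decrements a X, 1 <= d <= nvars, applicable a (tb s),
                    no_inc_in_stack a (tal s) & at_pos (tal s) X d]
  end.

Definition t_succ (s : tstate) (act : tact) (s' : tstate) : Prop :=
  match act with
  | Push X d => [/\ tb s' = tb s, tcT s' = tcT s,
                   tal s' = rcons (tal s) X
                 & forall i, tc s' i = if i == d then (tc s d).+1
                                       else if i == d.+1 then 0 else tc s i]
  | Pop X d => [/\ tb s' = tb s, tcT s' = tcT s,
                  tal s' = take d.-1 (tal s) & forall i, tc s' i = tc s i]
  | Move => [/\ tb s' = tb s, tcT s' = (tcT s).+1,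
               tal s' = tal s & forall i, tc s' i = tc s i]
  | Act a => [/\ td_succ a (tb s) (tb s'), tcT s' = tcT s,
                tal s' = tal s & forall i, tc s' i = tc s i]
  | ActD a X d => [/\ td_succ a (tb s) (tb s'), tcT s' = tcT s,
                     tal s' = tal s
                   & forall i, tc s' i = if d <= i <= nvars then 0 else tc s i]
  end.

Definition is_prefix (al st : seq V) : bool := al == take (size al) st.

Definition pistar (idx : bstate -> nat) (run : seq ({set bstate} * V))
    (s : tstate) : option tact :=
  let b := tb s in
  let al := tal s in
  let st := stack run b in
  if tcT s < idx b then
    (if rev al is X :: _ then Some (Pop X (size al)) else Some Move)
  else if ~~ is_prefix al st then
    (if rev al is X :: _ then Some (Pop X (size al)) else None)
  else if drop (size al) st is X :: _ then Some (Push X (size al))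
  else match pi b with
       | None => None
       | Some a =>
         if [forall Z, ~~ decrements a Z] then Some (Act a)
         else if [seq Z <- al | decrements a Z] is X :: _
              then Some (ActD a X (index X al).+1)
              else None
       end.

End QNPSemantics.

From Stdlib Require Import Reals Relations Lra Classical.
From mathcomp Require Import all_boot zify.

Set Implicit Arguments.
Unset Strict Implicit.
Unset Printing Implicit Defensive.

(* Two properties of the policy graph follow from [pi] solving [Q], each by
   turning a bad boolean path into an integer-valued 1-trajectory of [Q]
   (increments add a large constant, decrements subtract 1 or drop to 0):
   every node reaches a goal, and whenever [pi b] decrements a variable it
   decrements one in [stack b]; otherwise the final Sieve component of [b]
   increments every variable decremented in it, and going round it forever
   is realisable.
   Then [pistar] simulates a goal path of the policy graph: at each state it
   pops and moves until [c_T >= scc b] and the stack is a prefix of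
   [stack b], pushes the rest of [stack b] and applies [pi b], tagged with
   its lowest decremented stack variable.  No counter reaches [Max]: [c(d)]
   plus the number of states reachable by edges that decrement none of the
   first [d] stack variables never exceeds the number of boolean states,
   except for one unit of slack after a push at depth [d], which only
   survives along cycles of such edges, where the first [d+1] entries of
   [stack] are constant. *)

Lemma take_eq_short (T : eqType) (s s' : seq T) d :
  take d.+1 s = take d.+1 s' -> size s <= d -> s' = s.
Proof.
move=> e hs; have e1 : take d.+1 s = s by rewrite take_oversize // ltnW.
case: (leqP (size s') d) => hs'; first by rewrite -e1 e take_oversize // ltnW.
have : size (take d.+1 s') = size s by rewrite -e e1.
by rewrite size_takel // => h; move: hs; rewrite -h ltnn.
Qed.

Lemma path_connect_last (T : finType) (e : rel T) x p z :
  path e x p -> z \in x :: p -> connect e z (last x p).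
Proof.
elim: p x => [|y p IH] x /=; first by move=> _; rewrite inE => /eqP ->; apply: connect0.
case/andP => exy hp; rewrite inE => /orP [/eqP ->|hz]; last exact: IH.
exact: connect_trans (connect1 exy) (path_connect hp (mem_last y p)).
Qed.

Lemma cycle_ind (T : finType) (e : rel T) (P : T -> T -> Prop) :
  (forall x y, e x y -> connect e y x -> P x y) ->
  (forall x y z, P x y -> P y z -> P x z) -> (forall x, P x x) ->
  forall x y, connect e x y -> connect e y x -> P x y.
Proof.
move=> hstep htr hrefl x y /connectP [p hp ->]; elim: p x hp => [|z p IH] x //=.
case/andP => hxz hp hback; apply: (htr _ z).
  by apply: hstep => //; apply: connect_trans hback; apply/connectP; exists p.
by apply: IH => //; apply: connect_trans hback (connect1 hxz).
Qed.

Lemma is_prefix_full (T : finType) (al st : seq T) :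
  is_prefix al st -> drop (size al) st = [::] -> al = st.
Proof. by move=> /eqP hp hd; rewrite -[st](cat_take_drop (size al)) hd cats0 -hp. Qed.

Lemma filter_head_take (T : eqType) (P : pred T) (al : seq T) X r :
  [seq Z <- al | P Z] = X :: r -> forall d Z, d <= index X al -> Z \in take d al -> ~~ P Z.
Proof.
elim: al => [|y al IH] //=; case: ifP => hy.
  by case=> <- _ d Z; rewrite eqxx leqn0 => /eqP ->.
move=> hf d Z; have hX : y != X.
  apply/negP => /eqP e; have : X \in [seq Z <- al | P Z] by rewrite hf mem_head.
  by rewrite mem_filter -e hy.
rewrite (negbTE hX); case: d => [|d] //= hd; rewrite inE => /orP [/eqP ->|hZ].
  by rewrite hy.
exact: IH hf d Z hd hZ.
Qed.

Lemma size_uniq_le_nvars (V : finType) (al : seq V) : uniq al -> size al <= nvars V.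
Proof. by move/card_uniqP <-; apply: max_card. Qed.

Lemma rev_consE (T : Type) (al : seq T) X r : rev al = X :: r ->
  al = rcons (rev r) X /\ take (size al).-1 al = rev r.
Proof.
move=> e; have e' : al = rcons (rev r) X by rewrite -[al]revK e rev_cons.
by split => //; rewrite e' size_rcons /= -cats1 take_size_cat.
Qed.

Lemma mod_window l k r : 0 < l -> l <= k -> r < l ->
  exists j, [/\ k - l <= j, j < k & j %% l = r].
Proof.
move=> l0 hlk hr; have hdiv := divn_eq (k - l) l; have hs := ltn_pmod (k - l) l0.
set q := (k - l) %/ l in hdiv; set s := (k - l) %% l in hdiv hs.
case: (ltnP r s) => hrs.
  by exists (q.+1 * l + r); rewrite modnMDl modn_small // mulSn; split; lia.
by exists (q * l + r); rewrite modnMDl modn_small //; split; lia.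
Qed.

Lemma closed_walk_cover (T : finType) (e : rel T) (C : {set T}) b : b \in C ->
  {in C &, forall x y, connect e x y} ->
  exists p, [/\ path e b p, last b p = b & {subset C <= b :: p}].
Proof.
move=> bC hC; suff: forall s : seq T, {subset s <= C} ->
    exists p, [/\ path e b p, last b p = b & {subset s <= b :: p}].
  by move=> /(_ (enum C)) [|p [hp hl hs]]; [move=> z; rewrite mem_enum|exists p;
    split => // z hz; apply: hs; rewrite mem_enum].
elim=> [|t ts IH] hts; first by exists [::].
have [|p [hp hl hsub]] := IH; first by move=> z hz; apply: hts; rewrite inE hz orbT.
have tC : t \in C by apply: hts; rewrite mem_head.
move: (hC _ _ bC tC) (hC _ _ tC bC) => /connectP [q1 hq1 e1] /connectP [q2 hq2 e2].
exists (q1 ++ q2 ++ p); split.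
- by rewrite !cat_path hq1 -e1 hq2 -e2 /= hp.
- by rewrite !last_cat -e1 -e2.
- move=> z; rewrite inE => /orP [/eqP ->|hz].
    by rewrite e1 -cat_cons mem_cat mem_last.
  by move: (hsub z hz); rewrite !inE !mem_cat => /orP [->|->]; rewrite ?orbT.
Qed.

Lemma closed_walk_step (T : eqType) (e : rel T) (b : T) p (l := size p) :
  path e b p -> last b p = b -> 0 < l ->
  forall r, e (nth b (b :: p) (r %% l)) (nth b (b :: p) (r.+1 %% l)).
Proof.
move=> hp hl lpos r; have hr := ltn_pmod r lpos.
have -> : r.+1 %% l = (r %% l).+1 %% l by rewrite {1}(divn_eq r l) -addnS modnMDl.
have hE : e (nth b (b :: p) (r %% l)) (nth b p (r %% l)) by move/(pathP b): hp => /(_ _ hr).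
case: (ltnP (r %% l).+1 l) => h; first by rewrite (modn_small h).
have el : (r %% l).+1 = l by apply/eqP; rewrite eqn_leq h hr.
have ep : nth b p (r %% l) = b.
  by rewrite -[RHS]hl -nth_last; congr nth; rewrite -/l; lia.
by rewrite el modnn /= -[X in e _ X]ep.
Qed.

Lemma closed_walk_index (T : eqType) (b u : T) p (l := size p) : last b p = b ->
  0 < l -> u \in b :: p -> exists2 r, r < l & nth b (b :: p) r = u.
Proof.
move=> hl lpos hu; have hix : index u (b :: p) <= l by rewrite -ltnS index_mem.
case: (ltnP (index u (b :: p)) l) => hl'; first by exists (index u (b :: p)); rewrite ?nth_index.
exists 0 => //; have el : index u (b :: p) = (size (b :: p)).-1 by apply/eqP; rewrite eqn_leq hix.
by rewrite -[u](nth_index b hu) el nth_last /= hl.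
Qed.

Section BooleanSemantics.
Variables (F V O : finType) (Q : QNP F V O) (pi : qpolicy F V O).

Lemma decrementsE a X : decrements Q a X = (if neffs Q a X is Dec then true else false).
Proof. by rewrite /decrements; case: (neffs Q a X). Qed.

Lemma incrementsE a X : increments Q a X = (if neffs Q a X is Inc then true else false).
Proof. by rewrite /increments; case: (neffs Q a X). Qed.

Lemma pg_stepP b b' : pg_step Q pi b b' ->
  ~~ is_goal Q b /\ exists a, [/\ pi b = Some a, applicable Q a b & td_succ Q a b b'].
Proof.
rewrite /pg_step => /andP [hg]; case: (pi b) => [a|] // /andP [h1 h2].
by split => //; exists a.
Qed.

Lemma pg_edge_node b b' : pg_edge Q pi b b' -> pg_node Q pi b /\ pg_node Q pi b'.
Proof.
case/andP => hb hs; split => //; apply: connect_trans hb _; exact: connect1.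
Qed.

Lemma applicable_Dec a b X : applicable Q a b -> neffs Q a X = Dec -> b.2 X = false.
Proof.
move=> + hd; rewrite /applicable /sat_cond => /andP [_ /forallP /(_ X)].
by rewrite (dec_pre hd) => /eqP.
Qed.

Lemma td_succV a b b' X : td_succ Q a b b' ->
  match neffs Q a X with Inc => b'.2 X = false | Dec => True
  | NoEff => b'.2 X = b.2 X end.
Proof.
rewrite /td_succ => /andP [_ /forallP /(_ X)].
by case: (neffs Q a X) => // /eqP.
Qed.

Lemma td_succF a b b' p : td_succ Q a b b' ->
  b'.1 p = if effF Q a p is Some v then v else b.1 p.
Proof. by rewrite /td_succ => /andP [/forallP /(_ p) /eqP]. Qed.

End BooleanSemantics.

Section Realization.
Variables (F V O : finType) (Q : QNP F V O) (pi : qpolicy F V O).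
Local Notation bst := (bstate F V).

Definition inc_at (bs : nat -> bst) j X : bool :=
  if pi (bs j) is Some a then increments Q a X else false.

Definition dec_pos_at (bs : nat -> bst) i X : bool :=
  (if pi (bs i) is Some a then decrements Q a X else false) && ~~ (bs i.+1).2 X.

Fixpoint realize (bs : nat -> bst) (B : nat) (i : nat) (X : V) : nat :=
  match i with
  | 0 => if (initb Q).2 X then 0 else B
  | i'.+1 => match pi (bs i') with
             | None => realize bs B i' X
             | Some a => match neffs Q a X with
                         | Inc => realize bs B i' X + B
                         | Dec => if (bs i'.+1).2 X then 0 else (realize bs B i' X).-1
                         | NoEff => realize bs B i' X end end
  end.

Lemma realize_lower_bound bs B X j i : j <= i ->
  realize bs B i X = 0 \/ minn (realize bs B j X) B <= realize bs B i X + (i - j).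
Proof.
elim: i => [|i IH] hj.
  by right; move: hj; rewrite leqn0 => /eqP ->; lia.
move: hj; rewrite leq_eqVlt => /orP [/eqP <-|hj]; first by right; lia.
have {IH} [h|h] := IH hj; rewrite /=; case: (pi (bs i)) => [a|].
- by case: (neffs Q a X); [left|right; lia|case: ((bs i.+1).2 X); left; rewrite ?h].
- by left.
- case: (neffs Q a X); [right; lia|right; lia|].
  case: ((bs i.+1).2 X); first by left.
  by case E: (realize bs B i X) => [|v]; [left|right; rewrite E in h; lia].
- by right; lia.
Qed.

Lemma realize_inc bs B j X : inc_at bs j X -> B <= realize bs B j.+1 X.
Proof.
rewrite /inc_at /=; case: (pi (bs j)) => // a; rewrite incrementsE.
by case: (neffs Q a X) => // _; apply: leq_addl.
Qed.

Lemma pos_since_init_or_inc bs i X : (forall k, k < i -> pg_step Q pi (bs k) (bs k.+1)) ->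
  (bs i).2 X = false -> (bs 0).2 X = false \/ exists2 j, j < i & inc_at bs j X.
Proof.
elim: i => [|i IH] hs hi; first by left.
have [_ [a [ea ap td]]] := pg_stepP (hs i (ltnSn i)).
have IH' : (bs i).2 X = false ->
    (bs 0).2 X = false \/ exists2 j, j < i.+1 & inc_at bs j X.
  move=> h; have [|[j hj hj']] := IH (fun k hk => hs k (ltnW hk)) h; first by left.
  by right; exists j => //; apply: ltnW.
have := td_succV X td; case E: (neffs Q a X) => [||] h.
- by apply: IH'; rewrite -h.
- by right; exists i => //; rewrite /inc_at ea incrementsE E.
- exact: IH' (applicable_Dec ap E).
Qed.

Definition recent_inc (bs : nat -> bst) n N : Prop :=
  forall i X, N <= i -> i < n -> dec_pos_at bs i X ->
    exists j, [/\ j < i, i <= j + N & inc_at bs j X].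

Lemma realize_zeroE bs n N : bs 0 = initb Q ->
  (forall k, k < n -> pg_step Q pi (bs k) (bs k.+1)) -> recent_inc bs n N ->
  forall i, i <= n -> forall X, (bs i).2 X = (realize bs N.+2 i X == 0).
Proof.
move=> h0 hs hrec; elim=> [|i IH] hi X; first by rewrite h0 /=; case: ((initb Q).2 X).
have [_ [a [ea ap td]]] := pg_stepP (hs i hi).
have IHX := IH (ltnW hi) X.
rewrite /= ea; have := td_succV X td; case E: (neffs Q a X) => [||] h.
- by rewrite h.
- by rewrite h addn_eq0 andbF.
case H: ((bs i.+1).2 X) => //.
have pos : (bs i).2 X = false := applicable_Dec ap E.
have nz : realize bs N.+2 i X != 0 by rewrite -IHX pos.
(* [X] was set to at least [N+2] at most [N] steps ago and lost at most 1 per step since *)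
have [j [hji hNj hBj]] : exists j, [/\ j <= i, i - j <= N & N.+2 <= realize bs N.+2 j X].
  case: (leqP N i) => hNi.
    have [|j0 [h1 h2 h3]] := hrec i X hNi hi; first by rewrite /dec_pos_at ea decrementsE E H.
    by exists j0.+1; split; [lia|lia|exact: realize_inc].
  have [h00|[j0 h1 h2]] := pos_since_init_or_inc (fun k hk => hs k (ltn_trans hk hi)) pos.
    by exists 0; split => //; [lia|move: h00; rewrite h0 /= => ->].
  by exists j0.+1; split; [lia|lia|exact: realize_inc].
have [hv|] := realize_lower_bound bs N.+2 X hji; first by move: nz; rewrite hv.
by rewrite (minn_idPr hBj) => hv; apply/esym/eqP; lia.
Qed.

Definition realized_state (bs : nat -> bst) B i : qstate F V :=
  Build_qstate (bs i).1 (fun X => INR (realize bs B i X)).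

Lemma is_zero_INR v : is_zero (INR v) = (v == 0).
Proof.
rewrite /is_zero; case: Req_EM_T => h.
  by apply/esym/eqP; apply: INR_eq; rewrite h.
by apply/esym/eqP => hv; apply: h; rewrite hv.
Qed.

Lemma bar_realized_state (bs : nat -> bst) B i : (forall X, (bs i).2 X = (realize bs B i X == 0)) ->
  bar (realized_state bs B i) = bs i.
Proof.
rewrite /bar /realized_state /=; case: (bs i) => f g /= H; congr pair.
by apply/ffunP => X; rewrite ffunE is_zero_INR -H.
Qed.

Lemma INR_dist_ge1 u v : u <> v -> Rle 1 (Rabs (Rminus (INR u) (INR v))).
Proof.
wlog huv : u v / u < v.
  move=> hw h; case: (ltngtP u v) => huv; first exact: hw.
  - by rewrite Rabs_minus_sym; apply: hw => // e; apply: h.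
  - by move: h; rewrite huv.
move=> _; have -> : v = u + (v - u) by rewrite subnKC // ltnW.
have hw : Rle 1 (INR (v - u)) by apply: (le_INR 1); apply/leP; rewrite subn_gt0.
rewrite plus_INR Rabs_minus_sym Rabs_pos_eq; lra.
Qed.

Lemma realized_eps_step (bs : nat -> bst) B i : 0 < B ->
  (forall X, (bs i).2 X = (realize bs B i X == 0)) ->
  (forall X, (bs i.+1).2 X = (realize bs B i.+1 X == 0)) ->
  pg_step Q pi (bs i) (bs i.+1) ->
  pi_eps_step Q pi 1 (realized_state bs B i) (realized_state bs B i.+1).
Proof.
move=> hB h1 h2 hs; have [_ [a [ea ap td]]] := pg_stepP hs.
exists a; rewrite bar_realized_state //; split; [exact: ea|split; first exact: ap].
split; last by move=> X /= hne; left; apply: INR_dist_ge1 => hv; apply: hne; rewrite hv.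
split; first by move=> X; apply: pos_INR.
split; first by move=> p /=; apply: (td_succF p td).
move=> X /=; rewrite ea; case E: (neffs Q a X) => [||] //; apply: lt_INR; apply/ltP.
  by rewrite -{1}(addn0 (realize bs B i X)) ltn_add2l.
have nz : realize bs B i X != 0 by rewrite -h1 (applicable_Dec ap E).
by case: ((bs i.+1).2 X); rewrite ?lt0n //; move: nz; case: (realize bs B i X).
Qed.

Lemma infinite_pg_path_not_solves (bs : nat -> bst) N : bs 0 = initb Q ->
  (forall k, pg_step Q pi (bs k) (bs k.+1)) ->
  (forall n, recent_inc bs n N) -> ~ solves Q pi.
Proof.
move=> h0 hs hrec hsol; have [infinite _] := hsol R1 Rlt_0_1.
have hz i X : (bs i).2 X = (realize bs N.+2 i X == 0).
  exact: (realize_zeroE h0 (fun k _ => hs k) (hrec i)).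
have q0 : q_initial Q (realized_state bs N.+2 0).
  by split; [move=> X; apply: pos_INR|rewrite bar_realized_state // -h0].
have [i] := infinite _ q0 (fun i => realized_eps_step (ltn0Sn _) (hz i) (hz i.+1) (hs i)).
by rewrite bar_realized_state //; have [/negbTE -> _] := pg_stepP (hs i).
Qed.

Lemma stuck_pg_path_not_solves (bs : nat -> bst) n : bs 0 = initb Q ->
  (forall k, k < n -> pg_step Q pi (bs k) (bs k.+1)) -> ~~ is_goal Q (bs n) ->
  (if pi (bs n) is Some a then applicable Q a (bs n) = false else True) ->
  ~ solves Q pi.
Proof.
move=> h0 hs hgn hend hsol; have [_ finite] := hsol R1 Rlt_0_1.
have hrec : recent_inc bs n n by move=> i X h1 h2; lia.
have hz i : i <= n -> forall X, (bs i).2 X = (realize bs n.+2 i X == 0).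
  exact: realize_zeroE h0 hs hrec i.
have q0 : q_initial Q (realized_state bs n.+2 0).
  by split; [move=> X; apply: pos_INR|rewrite bar_realized_state; [exact: h0|exact: hz]].
have hst i : i < n -> pi_eps_step Q pi 1 (realized_state bs n.+2 i) (realized_state bs n.+2 i.+1).
  by move=> hi; apply: realized_eps_step => //; [exact: hz (ltnW hi)|exact: hz|exact: hs].
have [|i hi] := finite _ n q0 hst; first by rewrite bar_realized_state; [exact: hend|exact: hz].
rewrite bar_realized_state; last exact: hz.
move: hi; rewrite leq_eqVlt => /orP [/eqP ->|hi].
  by rewrite (negbTE hgn).
by have [/negbTE -> _] := pg_stepP (hs i hi).
Qed.

Lemma pg_path_nth (b : bst) p : path (pg_step Q pi) (initb Q) p -> b = last (initb Q) p ->
  let bs := fun i => nth b (initb Q :: p) i in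
  [/\ bs 0 = initb Q, forall k, k < size p -> pg_step Q pi (bs k) (bs k.+1)
    & bs (size p) = b].
Proof.
move=> hp hb bs; split => //; first by move=> k hk; move/(pathP b): hp => /(_ k hk).
by rewrite /bs hb -[size p]/((size (initb Q :: p)).-1) nth_last.
Qed.

Lemma pg_node_infinite_path_not_solves b (c : nat -> bst) N : pg_node Q pi b ->
  c 0 = b -> (forall k, pg_step Q pi (c k) (c k.+1)) -> (forall n, recent_inc c n N) ->
  ~ solves Q pi.
Proof.
move=> /connectP [p hp hb] c0 hs hrec.
have [h0 hs0 he] := pg_path_nth hp hb; set m := size p in hs0 he.
pose bs i := if i <= m then nth b (initb Q :: p) i else c (i - m).
have bsE k : m <= k -> bs k = c (k - m).
  rewrite /bs leq_eqVlt => /orP [/eqP <-|hk]; first by rewrite leqnn subnn he c0.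
  by rewrite leqNgt hk.
apply: (@infinite_pg_path_not_solves bs (m + N)) => //.
  move=> k; case: (ltnP k m) => hk; first by rewrite /bs ltnW // hk; apply: hs0.
  by rewrite bsE // bsE ?leqW // subSn.
move=> n i X hi _; have hmi : m <= i by lia.
rewrite /dec_pos_at (bsE _ hmi) (bsE _ (leqW hmi)) subSn // => hd.
have [|j [h1 h2 h3]] := hrec (i - m).+1 (i - m) X _ (ltnSn _) hd; first by lia.
by exists (m + j); split; [lia|lia|rewrite /inc_at bsE ?leq_addr // addKn].
Qed.

End Realization.

Section PolicyGraph.
Variables (F V O : finType) (Q : QNP F V O) (pi : qpolicy F V O).
Local Notation bst := (bstate F V).
Hypothesis hsol : solves Q pi.

Lemma pg_node_applicable b : pg_node Q pi b -> ~~ is_goal Q b ->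
  exists a, pi b = Some a /\ applicable Q a b.
Proof.
move=> /connectP [p hp hb] hg; apply: NNPP => hno.
have [h0 hs hn] := pg_path_nth hp hb.
apply: (stuck_pg_path_not_solves h0 hs) => //; rewrite hn //.
case E: (pi b) => [a|] //.
by apply/negbTE/negP => ha; apply: hno; exists a.
Qed.

Definition succ_to_zero (b : bst) : bst :=
  if pi b is Some a then
    ([ffun p => if effF Q a p is Some v then v else b.1 p],
     [ffun X => match neffs Q a X with Inc => false | Dec => true | NoEff => b.2 X end])
  else b.

Lemma succ_to_zero_td b a : pi b = Some a -> td_succ Q a b (succ_to_zero b).
Proof.
move=> e; rewrite /succ_to_zero e /td_succ; apply/andP; split; apply/forallP => x /=.
  by rewrite ffunE.
by rewrite ffunE; case: (neffs Q a x).
Qed.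

(* Iterating [succ_to_zero] from [b] gives a path on which every decrement
   zeroes its variable, so it is realisable whatever the increments. *)
Lemma pg_node_reaches_goal b : pg_node Q pi b ->
  exists g, connect (pg_step Q pi) b g /\ is_goal Q g.
Proof.
move=> hn; apply: NNPP => hno.
have ng g : connect (pg_step Q pi) b g -> ~~ is_goal Q g.
  by move=> hg; apply/negP => gg; apply: hno; exists g.
have stp u : connect (pg_step Q pi) b u -> pg_step Q pi u (succ_to_zero u).
  move=> hu; have [a [ea ap]] := pg_node_applicable (connect_trans hn hu) (ng u hu).
  by rewrite /pg_step (ng u hu) ea ap /= succ_to_zero_td.
have reach j : connect (pg_step Q pi) b (iter j succ_to_zero b).
  elim: j => [|j IH] /=; first exact: connect0.
  exact: (connect_trans IH (connect1 (stp _ IH))).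
apply: (@pg_node_infinite_path_not_solves F V O Q pi b (fun j => iter j succ_to_zero b) 0) => //.
  by move=> k; apply/stp/reach.
move=> n i X _ _; rewrite /dec_pos_at /= /succ_to_zero; case: (pi _) => [a|] //.
by rewrite ffunE decrementsE; case: (neffs Q a X).
Qed.

End PolicyGraph.

Section Sieve.
Variables (F V O : finType) (Q : QNP F V O) (pi : qpolicy F V O).
Variable run : seq ({set bstate F V} * V).
Local Notation bst := (bstate F V).
Local Notation E s := (sieve_graph Q pi s).
Hypothesis hrun : sieve_run Q pi run.

Lemma remove_edges_sub (e : rel bst) s u v : foldl (remove_edges Q pi) e s u v -> e u v.
Proof.
elim: s e => [|c s IH] e //= /IH.
by rewrite /remove_edges => /andP [].
Qed.

Lemma sieve_graph_pg_edge s u v : E s u v -> pg_edge Q pi u v.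
Proof. exact: remove_edges_sub. Qed.

Lemma sieve_graph_rcons s c u v : E (rcons s c) u v =
  E s u v && ~~ [&& u \in c.1, v \in c.1 & pi_decs Q pi u c.2].
Proof. by rewrite /sieve_graph foldl_rcons. Qed.

Lemma sieve_graph_take t t' u v : t <= t' -> E (take t' run) u v -> E (take t run) u v.
Proof.
move=> h; rewrite -(subnKC h) takeD /sieve_graph foldl_cat.
exact: remove_edges_sub.
Qed.

Lemma sieve_graph_final t u v : E run u v -> E (take t run) u v.
Proof.
move=> h; case: (leqP t (size run)) => ht.
  by apply: (sieve_graph_take ht); rewrite take_size.
by rewrite take_oversize // ltnW.
Qed.

Lemma connect_sieve_node s x y : connect (E s) x y -> pg_node Q pi x -> pg_node Q pi y.
Proof.
move=> h hx; apply: connect_trans hx _.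
apply: connect_sub h => u v /sieve_graph_pg_edge /andP [_ h].
exact: connect1.
Qed.

Lemma mem_take_run c t : c \in take t run ->
  exists t0, [/\ t0 < t, t0 < size run, nth c run t0 = c
               & sieve_choice Q pi (take t0 run) c.1 c.2].
Proof.
move=> hc; exists (index c (take t run)).
have : index c (take t run) < size (take t run) by rewrite index_mem.
rewrite size_take => hi.
have [h1 h2] : index c (take t run) < t /\ index c (take t run) < size run.
  by move: hi; case: ifP => h h'; split => //; lia.
have h3 : nth c run (index c (take t run)) = c by rewrite -(nth_take _ h1) nth_index.
by split => //; apply: (hrun.1 _ c.1 c.2 h2); rewrite -surjective_pairing.
Qed.

Lemma mem_run c : c \in run ->
  exists t0, [/\ t0 < size run, nth c run t0 = c
               & sieve_choice Q pi (take t0 run) c.1 c.2].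
Proof. by rewrite -{1}(take_size run) => /mem_take_run [t0 [_ h1 h2 h3]]; exists t0. Qed.

Lemma take_run_succ t : t < size run ->
  exists c, take t.+1 run = rcons (take t run) c /\ sieve_choice Q pi (take t run) c.1 c.2.
Proof.
move=> ht; have [c0 _] : exists c0, c0 \in run.
  by case: run ht => // c0 r _; exists c0; rewrite mem_head.
exists (nth c0 run t); split; first by rewrite (take_nth c0).
by apply: (hrun.1 _ _ _ ht); rewrite -surjective_pairing; apply: set_nth_default.
Qed.

Lemma is_scc_sub (E1 E2 : rel bst) C1 C2 b :
  is_scc Q pi E1 C1 -> is_scc Q pi E2 C2 -> subrel E2 E1 ->
  b \in C1 -> b \in C2 -> C2 \subset C1.
Proof.
move=> [u1 _ ->] [u2 _ ->] hsub.
rewrite !inE => /andP [/andP [_ a1] a2] /andP [/andP [_ b1] b2].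
have s x y : connect E2 x y -> connect E1 x y.
  by apply: connect_sub => x' y' h; apply/connect1/hsub.
apply/subsetP => v; rewrite !inE => /andP [/andP [-> c1] c2] /=.
apply/andP; split; first exact: connect_trans a1 (s _ _ (connect_trans b2 c1)).
exact: connect_trans (s _ _ (connect_trans c2 b1)) a2.
Qed.

Lemma stack_cat (s1 s2 : seq ({set bst} * V)) (b : bst) :
  stack (s1 ++ s2) b = stack s1 b ++ stack s2 b.
Proof. by rewrite /stack filter_cat map_cat. Qed.

Lemma stack_rcons (s : seq ({set bst} * V)) c (b : bst) :
  stack (rcons s c) b = stack s b ++ (if b \in c.1 then [:: c.2] else [::]).
Proof. by rewrite -cats1 stack_cat /stack /=; case: (b \in c.1). Qed.

Lemma stack_memP (s : seq ({set bst} * V)) (b : bst) X :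
  reflect (exists C, (C, X) \in s /\ b \in C) (X \in stack s b).
Proof.
apply: (iffP mapP) => [[[C Y]]|[C [hc hb]]].
  by rewrite mem_filter /= => /andP [hb hc] ->; exists C.
by exists (C, X); rewrite ?mem_filter ?hb.
Qed.

Lemma stack_uniq (b : bst) : uniq (stack run b).
Proof.
suff: forall t, t <= size run -> uniq (stack (take t run) b).
  by move/(_ (size run) (leqnn _)); rewrite take_size.
elim=> [|t IH] ht; first by rewrite take0.
have [[C X] [e [hscc [_ [_ hnew]]]]] := take_run_succ ht.
rewrite e stack_rcons; case: ifP => hb; last by rewrite cats0 IH // ltnW.
rewrite cat_uniq IH ?(ltnW ht) //= andbT orbF.
apply/stack_memP => -[C' [hc' hb']]; apply: hnew; exists C'; split => //.
have [t0 [h1 _ _ [hscc' _]]] := mem_take_run hc'.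
by apply: (is_scc_sub hscc' hscc _ hb' hb) => u v; apply/sieve_graph_take/ltnW.
Qed.

Lemma pi_incs_notin_stack b Y : pi_incs Q pi b Y -> Y \notin stack run b.
Proof.
move=> hi; apply/stack_memP => -[C [hc hb]].
have [t0 [_ _ [_ [_ [hnoinc _]]]]] := mem_run hc.
by move: (hnoinc b hb); rewrite hi.
Qed.

Lemma sieve_graph_removed C Y u v : (C, Y) \in run -> u \in C -> v \in C ->
  pi_decs Q pi u Y -> ~~ E run u v.
Proof.
move=> hc hu hv hd; have [t0 [ht hn _]] := mem_run hc.
apply/negP => /(sieve_graph_final t0.+1).
by rewrite (take_nth (C, Y) ht) hn sieve_graph_rcons /= hu hv hd andbF.
Qed.

Definition final_scc (u : bst) : {set bst} :=
  [set v | pg_node Q pi v && connect (E run) u v && connect (E run) v u].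

Lemma final_scc_self u : pg_node Q pi u -> u \in final_scc u.
Proof. by move=> hu; rewrite inE hu connect0. Qed.

Lemma final_scc_connect u x y : x \in final_scc u -> y \in final_scc u ->
  connect (E run) x y.
Proof.
rewrite !inE => /andP [/andP [_ h1] h2] /andP [/andP [_ h3] h4].
exact: connect_trans h2 h3.
Qed.

Lemma mem_final_scc u z : pg_node Q pi u ->
  connect (E run) u z -> connect (E run) z u -> z \in final_scc u.
Proof. by move=> hu h1 h2; rewrite inE h1 h2 (connect_sieve_node h1 hu). Qed.

Lemma sieve_exhausted u W : pg_node Q pi u ->
  (exists2 v, v \in final_scc u & pi_decs Q pi v W) ->
  (forall v, v \in final_scc u -> ~~ pi_incs Q pi v W) ->
  exists C', (C', W) \in run /\ final_scc u \subset C'.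
Proof.
move=> hu hdec hinc; apply: NNPP => hno; apply: hrun.2.
by exists (final_scc u), W; split; first by exists u.
Qed.

Section GuardedCycles.
Variable d : nat.

Definition guarded_edge (x y : bst) : bool :=
  pg_edge Q pi x y && all (fun Z => ~~ pi_decs Q pi x Z) (take d (stack run x)).
Local Notation K := guarded_edge.
Local Notation st t b := (stack (take t run) b).

Lemma guarded_edge_pg x y : K x y -> pg_edge Q pi x y.
Proof. by case/andP. Qed.

Definition stack_stable t : Prop :=
  forall x y, K x y -> connect K y x ->
    take d.+1 (st t x) = take d.+1 (st t y) /\ (size (st t x) <= d -> E (take t run) x y).

Lemma stack_stable0 : stack_stable 0.
Proof. by move=> x y /guarded_edge_pg h _; rewrite take0. Qed.

Lemma stable_cycle_prefix t x y : stack_stable t ->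
  connect K x y -> connect K y x -> take d.+1 (st t x) = take d.+1 (st t y).
Proof.
move=> hst; apply: (cycle_ind (P := fun x y => take d.+1 (st t x) = take d.+1 (st t y))).
- by move=> ? ? h1 h2; case: (hst _ _ h1 h2).
- by move=> ? ? ? -> ->.
- by [].
Qed.

Lemma stable_cycle_short t x y : stack_stable t ->
  connect K x y -> connect K y x ->
  size (st t x) <= d -> connect (E (take t run)) x y /\ size (st t y) <= d.
Proof.
move=> hst; apply: (cycle_ind (P := fun x y => size (st t x) <= d ->
                        connect (E (take t run)) x y /\ size (st t y) <= d)).
- move=> a b h1 h2 hs; have [eq1 hE1] := hst _ _ h1 h2.
  by split; [exact/connect1/hE1|rewrite (take_eq_short eq1 hs)].
- move=> a b c h1 h2 hs; have [c1 s1] := h1 hs; have [c2 s2] := h2 s1.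
  by split => //; apply: connect_trans c1 c2.
- by move=> ? hs; split => //; apply: connect0.
Qed.

(* If the stack of [x] is short, [x] and [y] lie in the same component at
   step [t], so the chosen component contains both or neither. *)
Lemma stack_stableS t : t < size run -> stack_stable t -> stack_stable t.+1.
Proof.
move=> ht hst x y hk hb.
have [[C X] [e [hscc _]]] := take_run_succ ht.
have stS w : st t.+1 w = st t w ++ (if w \in C then [:: X] else [::]).
  by rewrite e stack_rcons.
have [eqt hE] := hst x y hk hb.
have cxy : connect K x y := connect1 hk.
case: (leqP (size (st t x)) d) => hsz; last first.
  have hsy : d < size (st t y).
    by rewrite ltnNge; apply/negP => hy; move: hsz; rewrite (take_eq_short (esym eqt) hy) ltnNge hy.
  by split; [rewrite !stS !takel_cat|rewrite stS size_cat leqNgt (leq_trans hsz (leq_addr _ _))].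
have eyx := take_eq_short eqt hsz.
have [c1 _] := stable_cycle_short hst cxy hb hsz.
have [c2 _] : connect (E (take t run)) y x /\ size (st t x) <= d.
  by apply: stable_cycle_short hst hb cxy _; rewrite eyx.
have [nx ny] := pg_edge_node (guarded_edge_pg hk).
have memC : (x \in C) = (y \in C).
  move: hscc => /= [u0 _ ->]; rewrite !inE nx ny /=.
  by apply/idP/idP => /andP [h1 h2]; apply/andP; split;
    [exact: connect_trans h1 c1|exact: connect_trans c2 h2
    |exact: connect_trans h1 c2|exact: connect_trans c1 h2].
split; first by rewrite !stS eyx memC.
move=> hs'; rewrite e sieve_graph_rcons hE //=.
apply/negP => /and3P [hx hy hd].
move: hs'; rewrite stS hx => hs'.
have hX : X \in take d (stack run x).
  rewrite -(cat_take_drop t.+1 run) stack_cat stS hx take_cat.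
  by rewrite ltnNge hs' /= !mem_cat inE eqxx orbT.
by move: hk => /andP [_ /allP /(_ X hX)]; rewrite hd.
Qed.

Lemma guarded_cycle_stack x y : connect K x y -> connect K y x ->
  take d.+1 (stack run x) = take d.+1 (stack run y).
Proof.
have hst : stack_stable (size run).
  suff: forall t, t <= size run -> stack_stable t by apply.
  by elim=> [|t IH] ht; [exact: stack_stable0|exact: stack_stableS (IH (ltnW ht))].
by rewrite -{1 2}(take_size run); apply: stable_cycle_prefix.
Qed.

End GuardedCycles.

End Sieve.

Section Balance.
Variables (F V O : finType) (Q : QNP F V O) (pi : qpolicy F V O).
Variable run : seq ({set bstate F V} * V).
Local Notation E := (sieve_graph Q pi run).
Hypothesis hrun : sieve_run Q pi run.
Hypothesis hsol : solves Q pi.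

(* Going round a closed walk through the whole component forever, every
   decrement of [X] is preceded, less than one lap earlier, by an increment. *)
Lemma balanced_final_scc_single b (C := final_scc Q pi run b) :
  pg_node Q pi b ->
  (forall u W, u \in C -> pi_decs Q pi u W -> exists2 u', u' \in C & pi_incs Q pi u' W) ->
  forall b2, b2 \in C -> b2 = b.
Proof.
move=> nb hbal b2 hb2; apply/eqP/negPn/negP => nb2.
have bC : b \in C by apply: final_scc_self.
have [p [hp hl hsub]] := closed_walk_cover bC (@final_scc_connect _ _ _ _ _ _ b).
set l := size p.
have lpos : 0 < l.
  rewrite lt0n size_eq0; apply: contraNneq nb2 => p0.
  by move: (hsub _ hb2); rewrite p0 inE.
set lp := b :: p.
have lpC r : nth b lp r \in C.
  case: (ltnP r (size lp)) => hr; last by rewrite nth_default.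
  have hin : nth b lp r \in b :: p by apply: mem_nth.
  apply: mem_final_scc => //; first exact: (path_connect hp).
  by rewrite -{2}hl; apply: path_connect_last.
apply: (@pg_node_infinite_path_not_solves F V O Q pi b (fun k => nth b lp (k %% l)) l nb).
- by rewrite mod0n.
- by move=> k; have /sieve_graph_pg_edge /andP [] := closed_walk_step hp hl lpos k.
- move=> n i X hi _; rewrite /dec_pos_at; case ea: (pi _) => [a|] // /andP [hd _].
  have [|u' hu' hinc] := hbal _ X (lpC (i %% l)); first by rewrite /pi_decs ea.
  have [r' hr' er'] := closed_walk_index hl lpos (hsub _ hu').
  have [j [h1 h2 h3]] := mod_window lpos hi hr'.
  by exists j; split; [lia|lia|rewrite /inc_at h3 er'].
- exact: hsol.
Qed.

Lemma final_scc_out_edge b b2 u : pg_node Q pi b -> b2 \in final_scc Q pi run b ->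
  b2 != b -> u \in final_scc Q pi run b -> exists2 v, v \in final_scc Q pi run b & E u v.
Proof.
move=> nb hb2 nb2 hu; have bC := final_scc_self run nb.
have [w hw wu] : exists2 w, w \in final_scc Q pi run b & w != u.
  by case: (eqVneq b u) => hbu; [exists b2; rewrite -?hbu|exists b].
move: (final_scc_connect hu hw) => /connectP [[|v q] /= hq ew].
  by move: wu; rewrite ew eqxx.
move: hq => /andP [huv hq]; exists v => //.
apply: mem_final_scc => //; first exact: connect_trans (final_scc_connect bC hu) (connect1 huv).
have cvw : connect E v w by rewrite ew; apply/connectP; exists q.
exact: connect_trans cvw (final_scc_connect hw bC).
Qed.

Lemma decrement_in_stack b a Z : pg_node Q pi b -> pi b = Some a -> decrements Q a Z ->
  exists2 X, X \in stack run b & decrements Q a X.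
Proof.
move=> nb ea hdZ; apply: NNPP => hno.
set C := final_scc Q pi run b; have bC : b \in C by apply: final_scc_self.
have [b2 hb2 hinc2] : exists2 b2, b2 \in C & pi_incs Q pi b2 Z.
  apply: NNPP => h.
  have [|v hv|C' [hc hsub]] := sieve_exhausted hrun (W := Z) nb.
  - by exists b; rewrite // /pi_decs ea.
  - by apply/negP => hi; apply: h; exists v.
  by apply: hno; exists Z => //; apply/stack_memP; exists C'; rewrite (subsetP hsub).
have nb2 : b2 != b.
  apply: contraTneq hinc2 => ->; rewrite /pi_incs ea incrementsE.
  by move: hdZ; rewrite decrementsE; case: (neffs Q a Z).
suff hbal : forall u W, u \in C -> pi_decs Q pi u W ->
    exists2 u', u' \in C & pi_incs Q pi u' W.
  by move: nb2; rewrite (balanced_final_scc_single nb hbal hb2) eqxx.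
move=> u W hu hdW; apply: NNPP => h; have [v hv huv] := final_scc_out_edge nb hb2 nb2 hu.
have [|v' hv'|C' [hc hsub]] := sieve_exhausted hrun (W := W) nb.
- by exists u.
- by apply/negP => hi; apply: h; exists v'.
by move: (sieve_graph_removed hrun hc (subsetP hsub u hu) (subsetP hsub v hv) hdW); rewrite huv.
Qed.

End Balance.

Section Pistar.
Variables (F V O : finType) (Q : QNP F V O) (pi : qpolicy F V O).
Variables (idx : bstate F V -> nat) (run : seq ({set bstate F V} * V)).
Local Notation bst := (bstate F V).
Local Notation K d := (guarded_edge Q pi run d).
Local Notation pst := (pstep (t_goal Q) (t_app Q) (t_succ Q) (pistar Q pi idx run)).
Local Notation prc := (preach (t_goal Q) (t_app Q) (t_succ Q) (pistar Q pi idx run)).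
Hypothesis hidx : scc_indexing Q pi idx.
Hypothesis hrun : sieve_run Q pi run.

Lemma Max_card_bstate : Max F V = #|{: bst}|.+1.
Proof. by rewrite /Max card_prod !card_ffun card_bool -expnD add1n. Qed.

Lemma idx_le_card b : pg_node Q pi b -> idx b <= #|{: bst}|.
Proof.
move: hidx => [k [hrange [honto _]]] hb.
apply: leq_trans (proj2 (andP (hrange b hb))) _.
have : size (iota 1 k) <= size [seq idx x | x <- enum {: bst}].
  apply: uniq_leq_size; first exact: iota_uniq.
  move=> i; rewrite mem_iota add1n ltnS => hi.
  by have [x _ <-] := honto i hi; apply: map_f; rewrite mem_enum.
by rewrite size_iota size_map -cardT.
Qed.

Lemma idx_connect_eq b b' : pg_node Q pi b -> pg_node Q pi b' ->
  connect (pg_edge Q pi) b b' -> connect (pg_edge Q pi) b' b -> idx b = idx b'.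
Proof. by move: hidx => [k [_ [_ [hscc _]]]] hb hb' c1 c2; apply/eqP; rewrite hscc // c1 c2. Qed.

Lemma guarded_connect_pg d x y : connect (K d) x y -> connect (pg_edge Q pi) x y.
Proof. by apply: connect_sub => u v /guarded_edge_pg; apply: connect1. Qed.

Definition guarded_reach d (b : bst) : nat := #|[set v | connect (K d) b v]|.

Lemma guarded_reach_le d b : guarded_reach d b <= #|{: bst}|.
Proof. exact: max_card. Qed.

Lemma guarded_reach_edge d b b' : K d b b' -> guarded_reach d b' <= guarded_reach d b.
Proof.
move=> h; apply/subset_leq_card/subsetP => v; rewrite !inE.
exact: connect_trans (connect1 h).
Qed.

Lemma guarded_reach_cycle d b b' : K d b b' -> connect (K d) b' b ->
  guarded_reach d b' = guarded_reach d b.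
Proof.
move=> h h'; apply/eqP; rewrite eqn_leq guarded_reach_edge //=.
by apply/subset_leq_card/subsetP => v; rewrite !inE; apply: connect_trans h'.
Qed.

Lemma guarded_reach_lt d b b' : K d b b' -> ~~ connect (K d) b' b ->
  guarded_reach d b' < guarded_reach d b.
Proof.
move=> h h'; apply/proper_card/properP; split.
  by apply/subsetP => v; rewrite !inE; apply: connect_trans (connect1 h).
by exists b; rewrite !inE ?connect0.
Qed.

(* The counter c(d) is paid for by the number of states [K d]-reachable from
   the current one.  The one extra unit is granted by a push at depth [d] and
   lasts while the first [d+1] stack entries are those of the current state,
   which a [K d]-cycle cannot change. *)
Definition pistar_inv (s : tstate F V) : Prop :=
  [/\ pg_node Q pi (tb s), uniq (tal s),
   forall d, d < size (tal s) ->
     tc s d + guarded_reach d (tb s) <= #|{: bst}| \/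
     [/\ tc s d + guarded_reach d (tb s) <= #|{: bst}|.+1,
         take d.+1 (tal s) = take d.+1 (stack run (tb s)) & idx (tb s) <= tcT s]
   & tc s (size (tal s)) + guarded_reach (size (tal s)) (tb s) <= #|{: bst}|].

Lemma pistar_inv_act s s' : pistar_inv s -> tal s = stack run (tb s) -> idx (tb s) <= tcT s ->
  pg_edge Q pi (tb s) (tb s') -> tal s' = tal s -> tcT s' = tcT s ->
  (forall d, d <= size (tal s) -> tc s' d = 0 \/ (tc s' d = tc s d /\ K d (tb s) (tb s'))) ->
  pistar_inv s'.
Proof.
move=> [nb ua c1 c2] est hidxs he eal ecT hc.
have [_ nb'] := pg_edge_node he.
split => //; first by rewrite eal.
  move=> d; rewrite eal => hd.
  have [->|[-> hk]] := hc d (ltnW hd); first by left; rewrite add0n guarded_reach_le.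
  case: (boolP (connect (K d) (tb s') (tb s))) => hback; last first.
    by left; have := guarded_reach_lt hk hback; case: (c1 d hd) => [|[]]; lia.
  rewrite (guarded_reach_cycle hk hback); case: (c1 d hd) => [|[h1 h2 h3]]; first by left.
  right; split => //; first by rewrite h2; apply: (guarded_cycle_stack hrun) => //; apply: connect1.
  rewrite ecT -(idx_connect_eq nb nb') //; last exact: guarded_connect_pg hback.
  exact: guarded_connect_pg (connect1 hk).
rewrite eal; have [->|[-> hk]] := hc _ (leqnn _); first by rewrite add0n guarded_reach_le.
by apply: leq_trans c2; rewrite leq_add2l; apply: guarded_reach_edge.
Qed.

Lemma stack_push_split s X rest : is_prefix (tal s) (stack run (tb s)) ->
  drop (size (tal s)) (stack run (tb s)) = X :: rest ->
  stack run (tb s) = tal s ++ X :: rest /\ X \notin tal s.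
Proof.
move=> /eqP hpre hdrop.
have est : stack run (tb s) = tal s ++ X :: rest.
  by rewrite -{1}(cat_take_drop (size (tal s)) (stack run (tb s))) -hpre hdrop.
split => //; have := stack_uniq hrun (tb s); rewrite est cat_uniq /= => /and3P [_ + _].
by apply: contra => ->.
Qed.

Lemma pistar_inv_push s s' X rest : pistar_inv s -> idx (tb s) <= tcT s ->
  is_prefix (tal s) (stack run (tb s)) ->
  drop (size (tal s)) (stack run (tb s)) = X :: rest ->
  tb s' = tb s -> tcT s' = tcT s -> tal s' = rcons (tal s) X ->
  (forall i, tc s' i = if i == size (tal s) then (tc s (size (tal s))).+1
                       else if i == (size (tal s)).+1 then 0 else tc s i) ->
  pistar_inv s'.
Proof.
move=> [nb ua c1 c2] hix hpre hdrop eb ecT eal hc.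
have [est hXal] := stack_push_split hpre hdrop.
split; rewrite ?eb ?eal ?ecT //.
- by rewrite rcons_uniq hXal.
- move=> d; rewrite size_rcons ltnS leq_eqVlt => /orP [/eqP ->|hd].
    right; rewrite hc eqxx; split => //.
    by rewrite take_oversize ?size_rcons // est take_cat ltnNge leqnSn /= subSnn /= take0 cats1.
  rewrite hc (ltn_eqF hd) (ltn_eqF (ltnW hd : d < (size (tal s)).+1)).
  by rewrite -cats1 takel_cat //; apply: c1.
- by rewrite size_rcons hc eqxx (gtn_eqF (ltnSn _)) add0n guarded_reach_le.
Qed.

Lemma pistar_inv_pop s s' X al' : pistar_inv s -> tal s = rcons al' X ->
  (tcT s < idx (tb s) \/ ~~ is_prefix (tal s) (stack run (tb s))) ->
  tb s' = tb s -> tcT s' = tcT s -> tal s' = al' -> (forall i, tc s' i = tc s i) ->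
  pistar_inv s'.
Proof.
move=> [nb ua c1 c2] eal hcond eb ecT eal' hc.
have ht d : d < size al' -> take d.+1 (tal s) = take d.+1 al'.
  by move=> hd; rewrite eal -cats1 takel_cat.
split; rewrite ?eb ?eal' ?ecT //.
- by move: ua; rewrite eal rcons_uniq => /andP [].
- by move=> d hd; rewrite hc -ht //; apply: c1; rewrite eal size_rcons leqW.
rewrite hc; have := c1 (size al'); rewrite eal size_rcons => /(_ (ltnSn _)).
case=> [//|[_ hp hi]]; exfalso; case: hcond => [|/negP]; first by rewrite ltnNge hi.
apply; rewrite /is_prefix eal size_rcons; apply/eqP.
by rewrite -hp take_oversize // size_rcons.
Qed.

Lemma pistar_inv_move s s' : pistar_inv s -> tal s = [::] -> tb s' = tb s -> tal s' = [::] ->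
  (forall i, tc s' i = tc s i) -> pistar_inv s'.
Proof.
move=> [nb ua c1 c2] eal eb eal' hc.
by split; rewrite ?eb ?eal' //; rewrite hc; move: c2; rewrite eal.
Qed.

Lemma pistar_ready s : idx (tb s) <= tcT s -> tal s = stack run (tb s) ->
  pistar Q pi idx run s =
    if pi (tb s) is Some a then
      if [forall Z, ~~ decrements Q a Z] then Some (Act V a)
      else if [seq Z <- tal s | decrements Q a Z] is X :: _
           then Some (ActD a X (index X (tal s)).+1) else None
    else None.
Proof.
by move=> hix est; rewrite /pistar ltnNge hix /= -est /is_prefix take_size eqxx drop_size.
Qed.

Lemma pistar_inv_ready s s' act : pistar_inv s -> ~ t_goal Q s ->
  idx (tb s) <= tcT s -> tal s = stack run (tb s) ->
  pistar Q pi idx run s = Some act -> t_app Q s act -> t_succ Q s act s' -> pistar_inv s'.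
Proof.
move=> hI hng hix est; have [nb ua _ _] := hI.
rewrite (pistar_ready hix est); case ea: (pi (tb s)) => [a|] //.
have hpg b' : td_succ Q a (tb s) b' -> applicable Q a (tb s) -> pg_edge Q pi (tb s) b'.
  by move=> td ap; rewrite /pg_edge nb /pg_step ea ap td !andbT; apply/negP.
case: ifP => hnodec.
  case=> <- [_ ap _] [td ecT eal hc].
  apply: (pistar_inv_act hI est hix (hpg _ td ap) eal ecT) => d _.
  right; split => //; rewrite /guarded_edge hpg //=.
  by apply/allP => Z _; rewrite /pi_decs ea; move/forallP: hnodec.
case E3: [seq Z <- tal s | decrements Q a Z] => [|X r] // [<-] [_ _ ap _ _] [td ecT eal hc].
apply: (pistar_inv_act hI est hix (hpg _ td ap) eal ecT) => d hd.
rewrite hc; case: (leqP (index X (tal s)).+1 d) => hdi.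
  by left; rewrite (leq_trans hd (size_uniq_le_nvars ua)).
right; split => //; rewrite /guarded_edge hpg //=.
apply/allP => Z hZ; rewrite /pi_decs ea.
by apply: (filter_head_take E3 (d := d)) => //; rewrite est.
Qed.

Lemma pistar_inv_pstep s s' : pistar_inv s -> pst s s' -> pistar_inv s'.
Proof.
move=> hI [hng [act [hp [happ hsucc]]]]; move: hp; rewrite /pistar.
case h1: (tcT s < idx (tb s)).
  case E: (rev (tal s)) => [|X r] [eact]; subst act; case: hsucc => eb ecT eal hc.
    have e0 : tal s = [::] by apply/nilP; rewrite /nilp -size_rev E.
    by apply: (pistar_inv_move hI e0 eb); rewrite ?eal.
  have [e1 e2] := rev_consE E.
  by apply: (pistar_inv_pop hI e1 _ eb ecT _ hc); [left|rewrite eal].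
case h2: (~~ is_prefix (tal s) (stack run (tb s))).
  case E: (rev (tal s)) => [|X r] // [eact]; subst act; case: hsucc => eb ecT eal hc.
  have [e1 e2] := rev_consE E.
  by apply: (pistar_inv_pop hI e1 _ eb ecT _ hc); [right; rewrite h2|rewrite eal].
move/negbFE: h2 => h2; move/negbT: h1; rewrite -leqNgt => h1.
case E: (drop (size (tal s)) (stack run (tb s))) => [|X rest] hact; last first.
  case: hact => eact; subst act; case: hsucc => eb ecT eal hc.
  exact: (pistar_inv_push hI h1 h2 E eb ecT eal).
have est := is_prefix_full h2 E.
apply: (pistar_inv_ready hI hng h1 est _ happ hsucc).
by rewrite -hact /pistar ltnNge h1 /= h2 E.
Qed.

Lemma pstep_pop s X r : pistar_inv s -> ~~ is_goal Q (tb s) -> rev (tal s) = X :: r ->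
  (tcT s < idx (tb s) \/ ~~ is_prefix (tal s) (stack run (tb s))) ->
  pst s (Build_tstate (tb s) (tc s) (tcT s) (rev r)).
Proof.
move=> [_ ua _ _] hg E hc; have [e1 e2] := rev_consE E.
split; first exact/negP.
exists (Pop O X (size (tal s))); split.
  rewrite /pistar; case: ifP => h; first by rewrite E.
  by case: hc => [hh|->]; [rewrite hh in h|rewrite /= E].
split; last by split.
split => //.
- by move: (size_uniq_le_nvars ua); rewrite e1 size_rcons.
- by rewrite e1 mem_rcons mem_head.
- by rewrite /at_pos e1 size_rcons /= nth_rcons ltnn eqxx leqnn eqxx.
Qed.

Lemma pstep_move s : pistar_inv s -> ~~ is_goal Q (tb s) -> tal s = [::] ->
  tcT s < idx (tb s) -> pst s (Build_tstate (tb s) (tc s) (tcT s).+1 (tal s)).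
Proof.
move=> [nb _ _ _] hg e0 h; split; first exact/negP.
exists (Move V O); split; first by rewrite /pistar h e0.
split; last by split.
split; first by rewrite e0.
by rewrite Max_card_bstate ltnS; apply: leq_trans (ltnW h) (idx_le_card nb).
Qed.

Lemma pstep_push s X rest : pistar_inv s -> ~~ is_goal Q (tb s) -> idx (tb s) <= tcT s ->
  is_prefix (tal s) (stack run (tb s)) ->
  drop (size (tal s)) (stack run (tb s)) = X :: rest ->
  pst s (Build_tstate (tb s)
     (fun i => if i == size (tal s) then (tc s (size (tal s))).+1
               else if i == (size (tal s)).+1 then 0 else tc s i)
     (tcT s) (rcons (tal s) X)).
Proof.
move=> [_ _ _ c2] hg hix hpre E; have [est hX] := stack_push_split hpre E.
split; first exact/negP.
exists (Push O X (size (tal s))); split; first by rewrite /pistar ltnNge hix /= hpre /= E.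
split; last by split.
split => //.
- apply: leq_trans (size_uniq_le_nvars (stack_uniq hrun (tb s))).
  by rewrite est size_cat /= addnS ltnS leq_addr.
- by rewrite Max_card_bstate ltnS; apply: leq_trans c2; apply: leq_addr.
Qed.

Lemma no_inc_in_stack_ready s a : tal s = stack run (tb s) -> pi (tb s) = Some a ->
  no_inc_in_stack Q a (tal s).
Proof.
move=> est ea; apply/forallP => Y; apply/implyP => hi; rewrite est.
by apply: (pi_incs_notin_stack hrun); rewrite /pi_incs ea.
Qed.

Lemma preach_pstep s s1 s' : pst s s1 -> prc s1 s' -> prc s s'.
Proof. by move=> h1 h2; apply: rt_trans h2; apply: rt_step. Qed.

Lemma pop_all n : forall s, size (tal s) = n -> pistar_inv s -> ~~ is_goal Q (tb s) ->
  tcT s < idx (tb s) -> exists s', [/\ prc s s', pistar_inv s', tb s' = tb s,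
     tcT s' = tcT s & tal s' = [::]].
Proof.
elim: n => [|n IH] s hn hI hg h; first by exists s; split => //; [apply: rt_refl|apply: size0nil].
case E: (rev (tal s)) => [|X r]; first by move: hn; rewrite -size_rev E.
have hst := pstep_pop hI hg E (or_introl h).
have [|s' [h1 h2 h3 h4 h5]] := IH _ _ (pistar_inv_pstep hI hst) hg h.
  by move: hn; rewrite (rev_consE E).1 size_rcons => /eq_add_S.
by exists s'; split => //; apply: preach_pstep hst h1.
Qed.

Lemma move_to_scc n : forall s, idx (tb s) - tcT s = n -> tal s = [::] -> pistar_inv s ->
  ~~ is_goal Q (tb s) -> exists s', [/\ prc s s', pistar_inv s', tb s' = tb s,
     idx (tb s) <= tcT s' & tal s' = [::]].
Proof.
elim: n => [|n IH] s hn e0 hI hg.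
  by exists s; split => //; [apply: rt_refl|rewrite -subn_eq0 hn].
have h : tcT s < idx (tb s) by rewrite -subn_gt0 hn.
have hst := pstep_move hI hg e0 h.
have hn1 : idx (tb s) - (tcT s).+1 = n by rewrite subnS hn.
have [s' [h1 h2 h3 h4 h5]] :=
  IH (Build_tstate (tb s) (tc s) (tcT s).+1 (tal s)) hn1 e0 (pistar_inv_pstep hI hst) hg.
by exists s'; split => //; apply: preach_pstep hst h1.
Qed.

Lemma pop_to_prefix n : forall s, size (tal s) = n -> pistar_inv s -> ~~ is_goal Q (tb s) ->
  idx (tb s) <= tcT s -> exists s', [/\ prc s s', pistar_inv s', tb s' = tb s,
     idx (tb s) <= tcT s' & is_prefix (tal s') (stack run (tb s))].
Proof.
elim: n => [|n IH] s hn hI hg h.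
  by exists s; split => //; [exact: rt_refl|rewrite (size0nil hn) /is_prefix take0].
case hp: (is_prefix (tal s) (stack run (tb s))); first by exists s; split => //; apply: rt_refl.
case E: (rev (tal s)) => [|X r]; first by move: hn; rewrite -size_rev E.
have hst := pstep_pop hI hg E (or_intror (negbT hp)).
have [|s' [h1 h2 h3 h4 h5]] := IH _ _ (pistar_inv_pstep hI hst) hg h.
  by move: hn; rewrite (rev_consE E).1 size_rcons => /eq_add_S.
by exists s'; split => //; apply: preach_pstep hst h1.
Qed.

Lemma push_to_stack n : forall s, size (stack run (tb s)) - size (tal s) = n -> pistar_inv s ->
  ~~ is_goal Q (tb s) -> idx (tb s) <= tcT s -> is_prefix (tal s) (stack run (tb s)) ->
  exists s', [/\ prc s s', pistar_inv s', tb s' = tb s,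
     idx (tb s) <= tcT s' & tal s' = stack run (tb s')].
Proof.
elim: n => [|n IH] s hn hI hg h hp.
  exists s; split => //; first exact: rt_refl.
  by apply: is_prefix_full => //; apply: drop_oversize; rewrite -subn_eq0 hn.
case E: (drop (size (tal s)) (stack run (tb s))) => [|X rest].
  by move: hn; rewrite -size_drop E.
have hst := pstep_push hI hg h hp E.
have [est _] := stack_push_split hp E.
have hn1 : size (stack run (tb s)) - size (rcons (tal s) X) = n.
  by rewrite size_rcons subnS hn.
have hp1 : is_prefix (rcons (tal s) X) (stack run (tb s)).
  by rewrite /is_prefix size_rcons est take_cat ltnNge leqnSn /= subSnn /= take0 cats1.
have [s' [h1 h2 h3 h4 h5]] := IH (Build_tstate (tb s)
     (fun i => if i == size (tal s) then (tc s (size (tal s))).+1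
               else if i == (size (tal s)).+1 then 0 else tc s i)
     (tcT s) (rcons (tal s) X)) hn1 (pistar_inv_pstep hI hst) hg h hp1.
by exists s'; split => //; apply: preach_pstep hst h1.
Qed.

Lemma reach_ready s : pistar_inv s -> ~~ is_goal Q (tb s) ->
  exists s', [/\ prc s s', pistar_inv s', tb s' = tb s,
     idx (tb s) <= tcT s' & tal s' = stack run (tb s')].
Proof.
move=> hI hg.
have [s2 [p2 i2 b2 h2 hp2]] : exists s2, [/\ prc s s2, pistar_inv s2, tb s2 = tb s,
     idx (tb s) <= tcT s2 & is_prefix (tal s2) (stack run (tb s))].
  case: (ltnP (tcT s) (idx (tb s))) => h; last exact: (pop_to_prefix (erefl _) hI hg h).
  have [s1 [p1 i1 b1 c1 e1]] := pop_all (erefl _) hI hg h.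
  have [|s2 [p2 i2 b2 h2 e2]] := move_to_scc (erefl _) e1 i1; first by rewrite b1.
  exists s2; split => //; first exact: rt_trans p1 p2.
  - by rewrite b2.
  - by rewrite -b1.
  - by rewrite e2 /is_prefix take0.
have hg2 : ~~ is_goal Q (tb s2) by rewrite b2.
have hi2 : idx (tb s2) <= tcT s2 by rewrite b2.
have hpp2 : is_prefix (tal s2) (stack run (tb s2)) by rewrite b2.
have [s3 [p3 i3 b3 h3 e3]] := push_to_stack (erefl _) i2 hg2 hi2 hpp2.
by exists s3; split => //; [exact: rt_trans p2 p3|rewrite b3 b2|rewrite -b2].
Qed.

Hypothesis hsol : solves Q pi.

Lemma pistar_follows_pg_step s b' : pistar_inv s -> idx (tb s) <= tcT s ->
  tal s = stack run (tb s) -> pg_step Q pi (tb s) b' -> exists2 s', pst s s' & tb s' = b'.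
Proof.
move=> [nb ua _ _] hix est /pg_stepP [hg [a [ea ap td]]].
have hnoinc := no_inc_in_stack_ready est ea.
case: (boolP [forall Z, ~~ decrements Q a Z]) => hnodec.
  exists (Build_tstate b' (tc s) (tcT s) (tal s)) => //; split; first exact/negP.
  exists (Act V a); split; first by rewrite (pistar_ready hix est) ea hnodec.
  by split; [split => // Z; move/forallP: hnodec|split].
have [Z hZ] : exists Z, decrements Q a Z.
  by move: hnodec; rewrite negb_forall => /existsP [Z]; rewrite negbK; exists Z.
have [Y hYs hY] := decrement_in_stack hrun hsol nb ea hZ.
case E3: [seq Z <- tal s | decrements Q a Z] => [|X r].
  have : Y \in [seq Z <- tal s | decrements Q a Z] by rewrite mem_filter hY est.
  by rewrite E3.
have : X \in [seq Z <- tal s | decrements Q a Z] by rewrite E3 mem_head.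
rewrite mem_filter => /andP [hX hXal].
exists (Build_tstate b' (fun i => if (index X (tal s)).+1 <= i <= nvars V then 0 else tc s i)
                      (tcT s) (tal s)) => //.
split; first exact/negP.
exists (ActD a X (index X (tal s)).+1); split.
  by rewrite (pistar_ready hix est) ea (negbTE hnodec) E3.
split; last by split.
split => //; first by apply: leq_trans (size_uniq_le_nvars ua); rewrite index_mem.
by rewrite /at_pos /= index_mem hXal (nth_index X hXal) eqxx.
Qed.

Lemma pg_path_pistar_goal p : forall s, pistar_inv s ->
  path (pg_step Q pi) (tb s) p -> is_goal Q (last (tb s) p) ->
  exists g, prc s g /\ t_goal Q g.
Proof.
elim: p => [|b' p IH] s hI /=; first by move=> _ hg; exists s; split; first exact: rt_refl.
case/andP => hbb' hp hgl; have [hg _] := pg_stepP hbb'.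
have [s1 [p1 i1 b1 h1 e1]] := reach_ready hI hg.
rewrite -b1 in hbb' h1; have [s2 hst b2] := pistar_follows_pg_step i1 h1 e1 hbb'.
have [||g [pg gg]] := IH s2 (pistar_inv_pstep i1 hst); rewrite ?b2 //.
by exists g; split => //; apply: rt_trans p1 (preach_pstep hst pg).
Qed.

Lemma pistar_inv_init : pistar_inv (t_init Q).
Proof. by split => //=; [exact: connect0|rewrite add0n guarded_reach_le]. Qed.

Lemma pistar_inv_preach s : prc (t_init Q) s -> pistar_inv s.
Proof.
suff gen x y : prc x y -> pistar_inv x -> pistar_inv y by move/gen; apply; apply: pistar_inv_init.
elim=> [u v h|u|u v w _ IH1 _ IH2] hI //; [exact: pistar_inv_pstep hI h|exact: IH2 (IH1 hI)].
Qed.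

End Pistar.

Theorem theorem15 (F V O : finType) (Q : QNP F V O) (pi : qpolicy F V O)
    (idx : bstate F V -> nat) (run : seq ({set bstate F V} * V)) :
  scc_indexing Q pi idx ->
  sieve_run Q pi run ->
  solves Q pi ->
  strong_cyclic (t_init Q) (@t_goal F V O Q) (@t_app F V O Q)
                (@t_succ F V O Q) (pistar Q pi idx run).
Proof.
move=> hidx hrun hsol s hs; have hI := pistar_inv_preach hidx hrun hs.
have [nb _ _ _] := hI.
have [g [/connectP [p hp eg] hg]] := pg_node_reaches_goal hsol nb.
by apply: (pg_path_pistar_goal hidx hrun hsol hI hp); rewrite -eg.
Qed.
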